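(* Let $A,B,\beta,\xi_0,\theta>0$. Let $v_{n,m}\colon[\xi_0,\infty)\to[0,\infty)$, for integers $n,m\ge0$, and let $w\colon[\xi_0,\infty)\to[0,\infty)$ be bounded. Suppose that for all $n,m\ge0$ and $\xi\ge\xi_0$: (1) $v_{n+1,m}(\xi)\le v_{n,m}(\xi)$; (2) $v_{n+N,m}(\xi)\le(1-A\xi^{-\beta})v_{n,m}(\xi)$ for all integers $N>B\log\xi$; (3) $v_{0,m}(\xi)\le\theta^{-m}w(\xi)$; (4) $w$ decays rapidly in $\xi$. Then for any $c>0$ the sequence $t_n=\sup\{v_{n,m}(\xi):\ \xi>\xi_0,\ m\in\mathbb Z_{\ge0},\ m<c\log n\}$ decays rapidly in $n$.
   Context: A function $w\colon D\subseteq(0,\infty)\to\mathbb R$ decays rapidly in $\xi$ if for each $\ell\ge1$ there is $C$ with $|w(\xi)|\le C\xi^{-\ell}$ for all $\xi\in D$. A sequence $\{t_n\}$ decays rapidly in $n$ if for each $\ell\ge1$ there is $C$ with $|t_n|\le Cn^{-\ell}$ for all $n\ge1$. *)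

From Stdlib Require Import Reals.
From Coquelicot Require Import Coquelicot.
Open Scope R_scope.

Definition decays_rapidly_on (D : R -> Prop) (w : R -> R) : Prop :=
  forall l : nat, (1 <= l)%nat ->
    exists C : R, forall xi : R, D xi -> Rabs (w xi) <= C * / xi ^ l.

Definition seq_decays_rapidly (t : nat -> Rbar) : Prop :=
  forall l : nat, (1 <= l)%nat ->
    exists C : R, forall n : nat, (1 <= n)%nat ->
      Rbar_le (Rbar_abs (t n)) (Finite (C * / INR n ^ l)).

Definition tset (v : nat -> nat -> R -> R) (xi0 c : R) (n : nat) : R -> Prop :=
  fun x => exists (xi : R) (m : nat),
    xi0 < xi /\ INR m < c * ln (INR n) /\ x = v n m xi.

(* t_n = sup of that set, with the convention sup of the empty set = 0
   (all values are nonnegative); the sup is taken in the extended reals. *)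
Definition tseq (v : nat -> nat -> R -> R) (xi0 c : R) (n : nat) : Rbar :=
  match Lub_Rbar (tset v xi0 c n) with
  | m_infty => Finite 0
  | x => x
  end.

From Stdlib Require Import Reals Lra Lia Classical.
From Coquelicot Require Import Coquelicot.
Open Scope R_scope.

(* For fixed [m] and [xi], the sequence [n |-> v n m xi] is nonincreasing and shrinks by the
   factor [1 - A xi^-beta] every [N ~ B ln xi + 1] steps, hence is at most
   [exp (A xi0^-beta - n A xi^-beta / N) * v 0 m xi]; and [v 0 m xi <= n^p w xi] when
   [m < c ln n] and [p >= c |ln theta|].  Fix an integer [e >= 1 + beta].  If [n <= xi^(2e)],
   the rapid decay of [w] in [xi] bounds [w xi] by a multiple of [n^-(p+l)].  Otherwise
   [xi^(1+beta) <= sqrt n], so [n A xi^-beta / N >= a sqrt n] with [a = A/(B+1)], and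
   [exp (-a sqrt n)] beats every power of [n]. *)

Lemma exp_le_compat x y : x <= y -> exp x <= exp y.
Proof. intros [Hlt | ->]; [left; apply exp_increasing |]; lra. Qed.

Lemma ln_le_sub_1 x : 0 < x -> ln x <= x - 1.
Proof. intros Hx. generalize (exp_ineq1_le (ln x)). rewrite exp_ln; lra. Qed.

Lemma exists_nat_between y : 0 <= y -> exists N : nat, y < INR N <= y + 1.
Proof.
  intros Hy. destruct (nfloor_ex y Hy) as [k Hk].
  exists (S k). rewrite S_INR. lra.
Qed.

Lemma pow_div_le_exp q y : (1 <= q)%nat -> 0 <= y -> (y / INR q) ^ q <= exp y.
Proof.
  intros Hq Hy.
  assert (Hq0 : 0 < INR q) by (apply lt_0_INR; lia).
  assert (Hz : 0 <= y / INR q) by (apply Rdiv_le_0_compat; lra).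
  replace (exp y) with (exp (y / INR q) ^ q).
  - apply pow_incr. generalize (exp_ineq1_le (y / INR q)). lra.
  - rewrite <- Rpower_pow by apply exp_pos. unfold Rpower. rewrite ln_exp.
    f_equal. field. lra.
Qed.

Lemma exp_neg_mul_sqrt_le a t r : 0 < a -> 1 <= t -> (1 <= r)%nat ->
  exp (- (a * sqrt t)) <= (INR (2 * r) / a) ^ (2 * r) * / t ^ r.
Proof.
  intros Ha Ht Hr.
  set (q := (2 * r)%nat).
  assert (Hq0 : 0 < INR q) by (apply lt_0_INR; unfold q; lia).
  assert (Hpow : (a * sqrt t / INR q) ^ q = (a / INR q) ^ q * t ^ r).
  { replace (a * sqrt t / INR q) with (a / INR q * sqrt t) by (field; lra).
    rewrite Rpow_mult_distr. unfold q at 3. rewrite (pow_mult (sqrt t)), pow2_sqrt by lra. reflexivity. }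
  assert (Hpos : 0 < (a / INR q) ^ q * t ^ r).
  { apply Rmult_lt_0_compat; apply pow_lt; [apply Rdiv_lt_0_compat |]; lra. }
  rewrite exp_Ropp.
  replace ((INR q / a) ^ q * / t ^ r) with (/ ((a / INR q) ^ q * t ^ r)).
  - apply Rinv_le_contravar; [exact Hpos |]. rewrite <- Hpow.
    apply pow_div_le_exp; [unfold q; lia |].
    apply Rmult_le_pos; [lra | apply sqrt_pos].
  - rewrite Rinv_mult, <- pow_inv, Rinv_div. reflexivity.
Qed.

Lemma exp_neg_mul_sqrt_mul_pow_le a t p l : 0 < a -> 1 <= t -> (1 <= p + l)%nat ->
  exp (- (a * sqrt t)) * t ^ p <= (INR (2 * (p + l)) / a) ^ (2 * (p + l)) * / t ^ l.
Proof.
  intros Ha Ht Hpl.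
  assert (Htp : 0 < t ^ p) by (apply pow_lt; lra).
  apply Rle_trans with ((INR (2 * (p + l)) / a) ^ (2 * (p + l)) * / t ^ (p + l) * t ^ p).
  - apply Rmult_le_compat_r; [lra |]. apply exp_neg_mul_sqrt_le; assumption.
  - rewrite pow_add. right. field. split; apply pow_nonzero; lra.
Qed.

Lemma inv_pow_le_pow_ln theta t c m p : 0 < theta -> 1 <= t ->
  INR m <= c * ln t -> c * Rabs (ln theta) <= INR p -> / theta ^ m <= t ^ p.
Proof.
  intros Htheta Ht Hm Hp.
  assert (Hlnt : 0 <= ln t) by (rewrite <- ln_1; apply ln_le; lra).
  rewrite <- pow_inv, <- !Rpower_pow by (try apply Rinv_0_lt_compat; lra).
  unfold Rpower. apply exp_le_compat. rewrite ln_Rinv by lra.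
  generalize (Rle_abs (- ln theta)) (pos_INR m) (Rabs_pos (ln theta)).
  rewrite Rabs_Ropp. nra.
Qed.

Section PeriodicContraction.

Variables (u : nat -> R) (N : nat) (x : R).
Hypothesis u_ge0 : forall n, 0 <= u n.
Hypothesis u_contract : forall n, u (n + N)%nat <= (1 - x) * u n.

Lemma contraction_iterate k : u (k * N)%nat <= exp (- (INR k * x)) * u 0%nat.
Proof.
  induction k as [| k IHk].
  - rewrite Rmult_0_l, Ropp_0, exp_0. simpl. lra.
  - replace (S k * N)%nat with (k * N + N)%nat by lia.
    replace (- (INR (S k) * x)) with (- x + - (INR k * x)) by (rewrite S_INR; ring).
    rewrite exp_plus, Rmult_assoc.
    apply Rle_trans with ((1 - x) * u (k * N)%nat); [apply u_contract |].
    apply Rle_trans with (exp (- x) * u (k * N)%nat).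
    + apply Rmult_le_compat_r; [apply u_ge0 |]. generalize (exp_ineq1_le (- x)). lra.
    + apply Rmult_le_compat_l; [left; apply exp_pos | exact IHk].
Qed.

Hypothesis u_nonincreasing : forall n, u (S n) <= u n.
Hypothesis N_pos : (1 <= N)%nat.
Hypothesis x_ge0 : 0 <= x.

Lemma periodic_contraction_decay n :
  u n <= exp (x - INR n * x / INR N) * u 0%nat.
Proof.
  set (k := (n / N)%nat).
  assert (HN : 0 < INR N) by (apply lt_0_INR; lia).
  assert (Hkn : (k * N <= n)%nat) by (unfold k; rewrite Nat.mul_comm; apply Nat.Div0.mul_div_le).
  assert (Hnk : INR n <= (INR k + 1) * INR N).
  { rewrite <- S_INR, <- mult_INR. apply le_INR.
    generalize (Nat.div_mod n N ltac:(lia)) (Nat.mod_upper_bound n N ltac:(lia)). unfold k. nia. }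
  apply Rle_trans with (u (k * N)%nat).
  { apply (decreasing_prop u); [exact u_nonincreasing | exact Hkn]. }
  apply Rle_trans with (1 := contraction_iterate k).
  apply Rmult_le_compat_r; [apply u_ge0 |]. apply exp_le_compat.
  assert (INR n * x / INR N <= (INR k + 1) * x).
  { apply Rmult_le_reg_r with (INR N); [exact HN |].
    unfold Rdiv. rewrite Rmult_assoc, Rinv_l by lra. nra. }
  lra.
Qed.

End PeriodicContraction.

Lemma sqrt_ge_Rpower X e s t : 1 <= X -> s <= INR e -> X ^ (2 * e) <= t ->
  Rpower X s <= sqrt t.
Proof.
  intros HX Hs Ht.
  apply Rle_trans with (Rpower X (INR e)); [apply Rle_Rpower; lra |].
  rewrite Rpower_pow by lra.
  rewrite <- (sqrt_pow2 (X ^ e)) by (apply pow_le; lra).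
  apply sqrt_le_1_alt. rewrite <- pow_mult, Nat.mul_comm. exact Ht.
Qed.

Lemma contraction_rate_ge_sqrt A B beta xi e N t :
  0 < A -> 0 < B -> 0 < beta -> 0 < xi -> 1 + beta <= INR e -> 1 <= t ->
  xi ^ (2 * e) < t -> 0 < INR N <= B * ln (Rmax xi 1) + 1 ->
  A / (B + 1) * sqrt t <= t * (A * Rpower xi (- beta)) / INR N.
Proof.
  intros HA HB Hbeta Hxi He Ht Hxit [HN0 HN].
  set (X := Rmax xi 1) in HN |- *.
  assert (HX1 : 1 <= X) by apply Rmax_r.
  assert (HxiX : xi <= X) by apply Rmax_l.
  assert (HXt : X ^ (2 * e) <= t).
  { unfold X, Rmax. destruct (Rle_dec xi 1); [rewrite pow1 | ]; lra. }
  assert (HNX : INR N <= (B + 1) * X).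
  { assert (B * ln X <= B * (X - 1)) by (apply Rmult_le_compat_l; [lra | apply ln_le_sub_1; lra]). lra. }
  assert (HXs : Rpower X (1 + beta) <= sqrt t) by (apply (sqrt_ge_Rpower X e); lra).
  assert (Hpow_beta : Rpower X (- beta) <= Rpower xi (- beta)).
  { rewrite !Rpower_Ropp. apply Rinv_le_contravar; [unfold Rpower; apply exp_pos |].
    apply Rle_Rpower_l; lra. }
  assert (HXsplit : Rpower X (- beta) * Rpower X (1 + beta) = X).
  { rewrite <- Rpower_plus. replace (- beta + (1 + beta)) with 1 by ring. apply Rpower_1. lra. }
  assert (Hst : sqrt t * sqrt t = t) by (apply sqrt_sqrt; lra).
  assert (Hs0 : 0 < sqrt t) by (apply sqrt_lt_R0; lra).
  assert (HP0 : 0 < Rpower X (- beta)) by (unfold Rpower; apply exp_pos).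
  apply Rmult_le_reg_r with (INR N * (B + 1)); [nra |].
  unfold Rdiv. replace (A * / (B + 1) * sqrt t * (INR N * (B + 1))) with (A * sqrt t * INR N)
    by (field; lra).
  replace (t * (A * Rpower xi (- beta)) * / INR N * (INR N * (B + 1)))
    with (t * (A * Rpower xi (- beta)) * (B + 1)) by (field; lra).
  apply Rle_trans with (A * sqrt t * ((B + 1) * (Rpower X (- beta) * sqrt t))).
  - apply Rmult_le_compat_l; [nra |]. rewrite <- HXsplit, <- Rmult_assoc in HNX.
    apply Rle_trans with (1 := HNX). rewrite <- Rmult_assoc.
    apply Rmult_le_compat_l; [nra | exact HXs].
  - replace (A * sqrt t * ((B + 1) * (Rpower X (- beta) * sqrt t)))
      with (sqrt t * sqrt t * (A * Rpower X (- beta)) * (B + 1)) by ring.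
    rewrite Hst. apply Rmult_le_compat_r; [lra |].
    apply Rmult_le_compat_l; [lra |]. apply Rmult_le_compat_l; lra.
Qed.

Section EventualContraction.

Variables (A B beta xi0 xi : R) (u : nat -> R).
Hypotheses (HA : 0 < A) (HB : 0 < B) (Hbeta : 0 < beta) (Hxi0 : 0 < xi0) (Hxi : xi0 <= xi).
Hypothesis u_ge0 : forall k, 0 <= u k.
Hypothesis u_nonincreasing : forall k, u (S k) <= u k.
Hypothesis u_contract : forall k N, B * ln xi < INR N ->
  u (k + N)%nat <= (1 - A * Rpower xi (- beta)) * u k.

Lemma stretched_exp_decay e n : 1 + beta <= INR e -> (1 <= n)%nat -> xi ^ (2 * e) < INR n ->
  u n <= exp (A * Rpower xi0 (- beta) - A / (B + 1) * sqrt (INR n)) * u 0%nat.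
Proof.
  intros He Hn Hxin.
  assert (HlnX : 0 <= B * ln (Rmax xi 1)).
  { apply Rmult_le_pos; [lra |]. rewrite <- ln_1. apply ln_le; [lra | apply Rmax_r]. }
  (* Taking [N] above [B * ln (Rmax xi 1)] rather than [B * ln xi] keeps [N >= 1] when [xi < 1]. *)
  destruct (exists_nat_between _ HlnX) as [N [HN_gt HN_le]].
  assert (HN1 : (1 <= N)%nat) by (apply INR_lt; simpl; lra).
  assert (Hln : B * ln xi < INR N).
  { apply Rle_lt_trans with (2 := HN_gt). apply Rmult_le_compat_l; [lra |].
    apply ln_le; [lra | apply Rmax_l]. }
  set (x := A * Rpower xi (- beta)).
  assert (Hx0 : 0 <= x) by (unfold x, Rpower; generalize (exp_pos (- beta * ln xi)); nra).
  assert (Hx : x <= A * Rpower xi0 (- beta)).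
  { unfold x. apply Rmult_le_compat_l; [lra |]. rewrite !Rpower_Ropp.
    apply Rinv_le_contravar; [unfold Rpower; apply exp_pos |]. apply Rle_Rpower_l; lra. }
  assert (Hrate : A / (B + 1) * sqrt (INR n) <= INR n * x / INR N).
  { assert (1 <= INR n) by (apply (le_INR 1); exact Hn).
    apply contraction_rate_ge_sqrt with e; lra. }
  apply Rle_trans with (exp (x - INR n * x / INR N) * u 0%nat).
  - apply periodic_contraction_decay; auto.
  - apply Rmult_le_compat_r; [apply u_ge0 |]. apply exp_le_compat. lra.
Qed.

Lemma polynomial_decay e n p l M : 1 + beta <= INR e -> (1 <= n)%nat -> (1 <= p + l)%nat ->
  xi ^ (2 * e) < INR n -> u 0%nat <= INR n ^ p * M ->
  u n <= exp (A * Rpower xi0 (- beta)) * (INR (2 * (p + l)) / (A / (B + 1))) ^ (2 * (p + l))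
         * M * / INR n ^ l.
Proof.
  intros He Hn Hpl Hxin Hu0.
  assert (Hn1 : 1 <= INR n) by (apply (le_INR 1); exact Hn).
  assert (Ha : 0 < A / (B + 1)) by (apply Rdiv_lt_0_compat; lra).
  assert (HM : 0 <= M).
  { apply Rmult_le_reg_l with (INR n ^ p); [apply pow_lt; lra |].
    generalize (u_ge0 0%nat). lra. }
  apply Rle_trans with (1 := stretched_exp_decay e n He Hn Hxin).
  unfold Rminus. rewrite exp_plus, !Rmult_assoc.
  apply Rmult_le_compat_l; [left; apply exp_pos |].
  apply Rle_trans with (exp (- (A / (B + 1) * sqrt (INR n))) * INR n ^ p * M).
  - rewrite Rmult_assoc. apply Rmult_le_compat_l; [left; apply exp_pos | exact Hu0].
  - rewrite (Rmult_comm M), <- !Rmult_assoc. apply Rmult_le_compat_r; [exact HM |].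
    apply exp_neg_mul_sqrt_mul_pow_le; assumption.
Qed.

End EventualContraction.

Lemma pow_mul_le_of_decay C X y t k p l : 0 < X -> 1 <= t -> t <= X ^ k ->
  y <= C * / X ^ (k * (p + l)) -> t ^ p * y <= Rabs C * / t ^ l.
Proof.
  intros HX Ht HtX Hy.
  assert (Htp : 0 < t ^ p) by (apply pow_lt; lra).
  assert (Htpl : 0 < t ^ (p + l)) by (apply pow_lt; lra).
  assert (Hy' : y <= Rabs C * / t ^ (p + l)).
  { apply Rle_trans with (1 := Hy). rewrite pow_mult.
    apply Rle_trans with (Rabs C * / (X ^ k) ^ (p + l)).
    - apply Rmult_le_compat_r; [left; apply Rinv_0_lt_compat, pow_lt, pow_lt; lra |].
      apply Rle_abs.
    - apply Rmult_le_compat_l; [apply Rabs_pos |].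
      apply Rinv_le_contravar; [exact Htpl |]. apply pow_incr; lra. }
  apply Rle_trans with (t ^ p * (Rabs C * / t ^ (p + l))).
  - apply Rmult_le_compat_l; lra.
  - rewrite pow_add. right. field. split; apply pow_nonzero; lra.
Qed.

Lemma tseq_abs_le v xi0 c n b : 0 <= b ->
  (forall x, tset v xi0 c n x -> 0 <= x <= b) ->
  Rbar_le (Rbar_abs (tseq v xi0 c n)) (Finite b).
Proof.
  intros Hb Hset. unfold tseq.
  destruct (Lub_Rbar_correct (tset v xi0 c n)) as [Hub Hlub].
  assert (Hle_b : Rbar_le (Lub_Rbar (tset v xi0 c n)) (Finite b)).
  { apply Hlub. intros x Hx. apply Hset, Hx. }
  destruct (Lub_Rbar (tset v xi0 c n)) as [r | |]; simpl in Hle_b |- *.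
  - destruct (classic (exists x, tset v xi0 c n x)) as [[x Hx] | Hempty].
    + specialize (Hub x Hx). specialize (Hset x Hx). simpl in Hub.
      rewrite Rabs_pos_eq; lra.
    + assert (Hmin : Rbar_le (Finite r) m_infty).
      { apply Hlub. intros x Hx. exfalso. eauto. }
      contradiction.
  - contradiction.
  - rewrite Rabs_R0. exact Hb.
Qed.

Theorem proposition7p5
  (A B beta xi0 theta : R)
  (HA : 0 < A) (HB : 0 < B) (Hbeta : 0 < beta) (Hxi0 : 0 < xi0) (Htheta : 0 < theta)
  (v : nat -> nat -> R -> R) (w : R -> R)
  (Hv_nonneg : forall n m xi, xi0 <= xi -> 0 <= v n m xi)
  (Hw_nonneg : forall xi, xi0 <= xi -> 0 <= w xi)
  (Hw_bdd : exists M : R, forall xi, xi0 <= xi -> Rabs (w xi) <= M)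
  (H1 : forall n m xi, xi0 <= xi -> v (S n) m xi <= v n m xi)
  (H2 : forall n m xi, xi0 <= xi -> forall N : nat, B * ln xi < INR N ->
          v (n + N)%nat m xi <= (1 - A * Rpower xi (- beta)) * v n m xi)
  (H3 : forall m xi, xi0 <= xi -> v 0%nat m xi <= / theta ^ m * w xi)
  (H4 : decays_rapidly_on (fun xi => xi0 <= xi) w) :
  forall c : R, 0 < c -> seq_decays_rapidly (tseq v xi0 c).
Proof.
  intros c Hc l Hl.
  destruct (INR_unbounded (c * Rabs (ln theta))) as [p Hp].
  destruct (INR_unbounded (1 + beta)) as [e He].
  assert (He1 : (1 <= e)%nat) by (apply INR_lt; simpl; lra).
  destruct Hw_bdd as [M HM].
  destruct (H4 (2 * e * (p + l))%nat ltac:(lia)) as [CL HCL].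
  set (K := exp (A * Rpower xi0 (- beta)) * (INR (2 * (p + l)) / (A / (B + 1))) ^ (2 * (p + l))).
  assert (HKM : 0 <= K * Rabs M).
  { apply Rmult_le_pos; [apply Rmult_le_pos | apply Rabs_pos]; [left; apply exp_pos |].
    apply pow_le, Rdiv_le_0_compat; [apply pos_INR | apply Rdiv_lt_0_compat; lra]. }
  exists (Rabs CL + K * Rabs M). intros n Hn.
  assert (Hn1 : 1 <= INR n) by (apply (le_INR 1); exact Hn).
  assert (Hnl : 0 < / INR n ^ l) by (apply Rinv_0_lt_compat, pow_lt; lra).
  generalize (Rabs_pos CL); intro HCL0.
  apply tseq_abs_le; [nra |].
  intros x [xi [m [Hxi [Hm ->]]]]. split; [apply Hv_nonneg; lra |].
  assert (Hv0 : v 0%nat m xi <= INR n ^ p * w xi).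
  { apply Rle_trans with (1 := H3 m xi ltac:(lra)).
    apply Rmult_le_compat_r; [apply Hw_nonneg | apply inv_pow_le_pow_ln with c]; lra. }
  destruct (Rle_or_lt (INR n) (xi ^ (2 * e))) as [Hnear | Hfar].
  - apply Rle_trans with (Rabs CL * / INR n ^ l); [| nra].
    apply Rle_trans with (INR n ^ p * w xi).
    + apply Rle_trans with (2 := Hv0).
      apply (decreasing_prop (fun k => v k m xi)); [intro k; apply H1; lra | lia].
    + apply pow_mul_le_of_decay with xi (2 * e)%nat; try lra.
      apply Rle_trans with (1 := Rle_abs _). apply HCL. lra.
  - apply Rle_trans with (K * Rabs M * / INR n ^ l); [| nra].
    apply (polynomial_decay A B beta xi0 xi (fun k => v k m xi)) with (e := e); try lra; try lia.
    + intro k. apply Hv_nonneg. lra.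
    + intro k. apply H1. lra.
    + intros k N. apply H2. lra.
    + apply Rle_trans with (1 := Hv0). apply Rmult_le_compat_l; [apply pow_le; lra |].
      apply Rle_trans with (1 := Rle_abs _), Rle_trans with (1 := HM xi ltac:(lra)), Rle_abs.
Qed.
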